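(* Let $R$ be a Bézout domain and let $A,B,C\in R^{n\times n}$ satisfy $ABA=ACA$. If $R_r(A)=R_r(ABA)$, then $AB$ is similar to $CA$.
   Context: A Bézout domain is an integral domain in which every finitely generated ideal is principal. For $M\in R^{m\times n}$, $R_r(M)=\{Mx : x\in R^{n\times 1}\}\subseteq R^{m\times 1}$ is the column space of $M$. Two matrices $M,N\in R^{n\times n}$ are similar if $M=S^{-1}NS$ for some invertible $S\in R^{n\times n}$. *)

From HB Require Import structures.
From mathcomp Require Import all_boot all_order all_algebra.
Set Implicit Arguments. Unset Strict Implicit. Unset Printing Implicit Defensive.
Import GRing.Theory.
Local Open Scope ring_scope.

Definition bezout_domain (R : idomainType) : Prop :=
  forall (k : nat) (a : 'I_k -> R), exists d : R,
    forall x : R,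
      (exists c : 'I_k -> R, x = \sum_(i < k) c i * a i) <-> (exists r : R, x = r * d).

Definition colspace (R : pzRingType) (m n : nat) (M : 'M[R]_(m, n)) : 'cV[R]_m -> Prop :=
  fun y => exists x : 'cV[R]_n, y = M *m x.

Definition mx_similar (R : comUnitRingType) (n : nat) (M N : 'M[R]_n) : Prop :=
  exists S : 'M[R]_n, S \in unitmx /\ M = invmx S *m N *m S.

(* From R_r(A) = R_r(ABA) we get X with A = ABAX.  Over the fraction field A and
   ABA, as well as CA and CACA, then have equal ranks, which allows one to cancel
   ABA to A and CACA to CA on the left; this gives AXBA = A, CAXCA = CA and
   AXCAX = AX.  Hence V = CAXB is a reflexive generalized inverse of U = AX
   (UVU = U, VUV = V) with V AB = CA V, where AB lives on the image of the
   idempotent UV and CA on that of VU.  Over a Bezout domain every idempotent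
   matrix is similar to some pid_mx r (a nonzero column of it can be moved to a
   multiple of e_0 and split off), and UV, VU have the same rank, so V extends
   by a map W between the complements of UV and VU to an invertible S = V + W
   with S AB = CA S. *)

From HB Require Import structures.
From mathcomp Require Import all_boot all_order all_algebra.
Set Implicit Arguments. Unset Strict Implicit. Unset Printing Implicit Defensive.
Import GRing.Theory.
Local Open Scope ring_scope.

Section BlockMatrices.
Variable R : comRingType.

Definition mx2 (p q r s : R) : 'M[R]_2 :=
  \matrix_(i < 2, j < 2)
    if i == 0 then (if j == 0 then p else q) else (if j == 0 then r else s).
Definition col2 (a b : R) : 'cV[R]_2 := \col_(i < 2) if i == 0 then a else b.

Lemma mul_mx2 p q r s p' q' r' s' :
  mx2 p q r s *m mx2 p' q' r' s' =
  mx2 (p * p' + q * r') (p * q' + q * s') (r * p' + s * r') (r * q' + s * s').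
Proof.
apply/matrixP=> i j; rewrite !mxE !big_ord_recl big_ord0 !mxE addr0.
by case: i => [[|[|]]] //= ?; case: j => [[|[|]]].
Qed.

Lemma mx2_id : mx2 1 0 0 1 = 1%:M.
Proof.
by apply/matrixP=> i j; rewrite !mxE; case: i => [[|[|]]] //= ?; case: j => [[|[|]]].
Qed.

Lemma mul_mx2_col2 p q r s a b :
  mx2 p q r s *m col2 a b = col2 (p * a + q * b) (r * a + s * b).
Proof.
apply/matrixP=> i j; rewrite !mxE !big_ord_recl big_ord0 !mxE addr0.
by case: i => [[|[|]]].
Qed.

Lemma col_mx_delta n (c : R) : (c *: delta_mx 0 0 : 'cV[R]_(1 + n)) = col_mx c%:M 0.
Proof.
apply/matrixP=> i j; rewrite !mxE (ord1 j); case: splitP => k hk; rewrite !mxE.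
  by rewrite (ord1 k) -(inj_eq val_inj) /= in hk *; rewrite hk !eqxx mulr1.
by rewrite -(inj_eq val_inj) /= hk mulr0.
Qed.

Lemma col_mx_col2 n (a d : R) :
  col_mx a%:M (d *: delta_mx 0 0 : 'cV_n.+1) = col_mx (col2 a d) 0 :> 'cV_(2 + n).
Proof.
apply/matrixP=> i j; rewrite !mxE (ord1 j).
case: splitP => k hk; case: splitP => l hl; rewrite !mxE -?(inj_eq val_inj) /=;
  move: hk hl; case: k => [k hk'] /=; case: l => [l hl'] /= -> //.
all: case: k hk' => [|k] hk' /=; rewrite ?mulr1 ?mulr0 //.
all: by move=> hl; subst l.
Qed.

Lemma col_mx_col2_delta n (g : R) :
  col_mx (col2 g 0) 0 = g *: delta_mx 0 0 :> 'cV_(2 + n).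
Proof.
apply/matrixP=> i j; rewrite !mxE (ord1 j); case: splitP => k hk; rewrite !mxE.
  rewrite -[i == 0](inj_eq val_inj) /= hk.
  by case: k {hk} => [[|[|]]] //= _; rewrite ?mulr1 ?mulr0.
by rewrite -[i == 0](inj_eq val_inj) /= hk mulr0.
Qed.

Lemma pid_mx_lift n r :
  block_mx (1%:M : 'M[R]_1) 0 0 (pid_mx r : 'M_n) = pid_mx (1 + r) :> 'M_(1 + n).
Proof.
apply/matrixP=> i j; rewrite !mxE; case: (splitP i) => i' hi; rewrite !mxE;
  case: (splitP j) => j' hj; rewrite !mxE hi hj /=.
- by rewrite (ord1 i') (ord1 j').
- by rewrite (ord1 i').
- by rewrite (ord1 j').
- by rewrite !add1n eqSS ltnS.
Qed.

End BlockMatrices.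

Section Similarity.
Variable R : comUnitRingType.

Lemma mx_similarP n (M N : 'M[R]_n) :
  mx_similar M N <-> exists2 S, S \in unitmx & S *m M = N *m S.
Proof.
split=> [[S [Su ->]]|[S Su SM]]; exists S => //.
  by rewrite !mulmxA mulmxV ?mul1mx.
by split=> //; rewrite -mulmxA -SM mulKmx.
Qed.

Lemma mx_similar_trans n (M N P : 'M[R]_n) :
  mx_similar M N -> mx_similar N P -> mx_similar M P.
Proof.
move=> /mx_similarP[S Su SM] /mx_similarP[T Tu TN]; apply/mx_similarP.
by exists (T *m S); rewrite ?unitmx_mul ?Su ?Tu // -mulmxA SM !mulmxA TN.
Qed.

Lemma reflexive_inverse_complement n (U V P : 'M[R]_n) :
  P *m P = P -> mx_similar (U *m V) P -> mx_similar (V *m U) P ->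
  U *m V *m U = U -> V *m U *m V = V ->
  exists W, [/\ V + W \in unitmx, W *m (U *m V) = 0 & V *m U *m W = 0].
Proof.
move=> idP [S1 [S1u E]] [S2 [S2u F]] UVU VUV.
pose Q := 1%:M - P.
have PQ : P *m Q = 0 by rewrite mulmxBr mulmx1 idP subrr.
have QP : Q *m P = 0 by rewrite mulmxBl mul1mx idP subrr.
have QQ : Q *m Q = Q by rewrite {1}/Q mulmxBl mul1mx PQ subr0.
pose W := invmx S2 *m Q *m S1; pose W' := invmx S1 *m Q *m S2.
have WE : W *m (U *m V) = 0.
  by rewrite /W E !mulmxA mulmxK // -(mulmxA _ Q) QP mulmx0 mul0mx.
have FW : V *m U *m W = 0.
  by rewrite /W F !mulmxA mulmxK // -(mulmxA _ P) PQ mulmx0 mul0mx.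
have W'F : W' *m (V *m U) = 0.
  by rewrite /W' F !mulmxA mulmxK // -(mulmxA _ Q) QP mulmx0 mul0mx.
exists W; split=> //.
suff /mulmx1_unit[] : (U + W') *m (V + W) = 1%:M by [].
have UW : U *m W = 0 by rewrite -{1}UVU -[U *m V *m U]mulmxA -mulmxA FW mulmx0.
have W'V : W' *m V = 0 by rewrite -VUV mulmxA W'F mul0mx.
have W'W : W' *m W = 1%:M - U *m V.
  rewrite /W /W' !mulmxA mulmxK // -(mulmxA _ Q Q) QQ E.
  by rewrite mulmxBr mulmx1 !mulmxBl mulVmx.
by rewrite mulmxDl !mulmxDr UW W'V W'W addr0 add0r addrC subrK.
Qed.

Lemma idempotent_block n (E : 'M[R]_(1 + n)) :
  E *m E = E -> E *m delta_mx 0 0 = delta_mx 0 0 :> 'cV_(1 + n) ->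
  exists a D, [/\ E = block_mx 1%:M a 0 D, D *m D = D & a *m D = 0].
Proof.
move=> idE Ee; have EK := submxK E.
have /eq_col_mx[u1 l0] : col_mx (ulsubmx E) (dlsubmx E) = col_mx 1%:M 0.
  move: Ee; rewrite -(scale1r (delta_mx 0 0 : 'cV_(1 + n))) col_mx_delta -{1}EK.
  by rewrite mul_block_col !mulmx0 !addr0 !mulmx1.
rewrite u1 l0 in EK; set a := ursubmx E in EK; set D := drsubmx E in EK.
have : block_mx 1%:M a 0 D *m block_mx 1%:M a 0 D = block_mx 1%:M a 0 D by rewrite EK.
rewrite mulmx_block !mulmx0 !mul0mx !mulmx1 !mul1mx !addr0 !add0r.
case/eq_block_mx=> _ aD _ DD; exists a, D; split=> //.
by move: aD; rewrite -[RHS]addr0 => /addrI.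
Qed.

Lemma block_similar_pid n r (a : 'rV[R]_n) (D : 'M[R]_n) :
  a *m D = 0 -> mx_similar D (pid_mx r) ->
  mx_similar (block_mx 1%:M a 0 D : 'M_(1 + n)) (pid_mx (1 + r)).
Proof.
move=> aD /mx_similarP[T Tu TD]; apply/mx_similarP.
exists (block_mx 1%:M 0 0 T *m block_mx 1%:M a 0 1%:M).
  by rewrite unitmx_mul !unitmxE !det_ublock !det1 !mul1r -unitmxE Tu unitr1.
rewrite -pid_mx_lift !mulmx_block !mulmx0 !mul0mx !mulmx1 !mul1mx !addr0 !add0r.
by rewrite mul1mx mul0mx mulmx0 aD addr0 add0r TD.
Qed.

End Similarity.

Section FractionRank.
Variable R : idomainType.
Local Notation rkF M := (\rank (map_mx (@tofrac R) M)).

Lemma map_tofrac_inj m n : injective (map_mx (@tofrac R) : 'M[R]_(m, n) -> _).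
Proof.
move=> M N /matrixP eqMN; apply/matrixP=> i j; apply/eqP.
by rewrite -tofrac_eq; move: (eqMN i j); rewrite !mxE => ->.
Qed.

Lemma frac_rank_mulmx_le m1 m2 m3 m4 (X : 'M[R]_(m1, m2)) (Y : 'M[R]_(m2, m3))
    (Z : 'M[R]_(m3, m4)) :
  (rkF (X *m Y *m Z) <= rkF Y)%N.
Proof. by rewrite !map_mxM; apply: leq_trans (mxrankM_maxl _ _) (mxrankM_maxr _ _). Qed.

Lemma frac_rank_similar_pid n r (E : 'M[R]_n) :
  (r <= n)%N -> mx_similar E (pid_mx r) -> rkF E = r.
Proof.
move=> rn [S [Su ->]].
have rk_pid : rkF (pid_mx r : 'M_n) = r by rewrite map_pid_mx rank_pid_mx.
apply/eqP; rewrite eqn_leq; apply/andP; split.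
  by apply: leq_trans (frac_rank_mulmx_le _ _ _) _; rewrite rk_pid.
apply: leq_trans (_ : r <= rkF (pid_mx r : 'M_n))%N _; first by rewrite rk_pid.
have {1}-> : pid_mx r = S *m (invmx S *m pid_mx r *m S) *m invmx S :> 'M_n.
  by rewrite !mulmxA mulmxV // mul1mx mulmxK.
exact: frac_rank_mulmx_le.
Qed.

Lemma mulmx_cancel_inner m n k (A : 'M[R]_(m, n)) (P Y : 'M[R]_n) (Q : 'M[R]_m)
    (W1 W2 : 'M[R]_(n, k)) :
  A *m P *m Y = A -> A *m P = Q *m A ->
  A *m P *m W1 = A *m P *m W2 -> A *m W1 = A *m W2.
Proof.
move=> APY APQ APW.
have [Z AZ] : exists Z, map_mx (@tofrac R) A = Z *m map_mx (@tofrac R) (Q *m A).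
  apply/submxP; have sub := submxMl (map_mx (@tofrac R) Q) (map_mx (@tofrac R) A).
  rewrite -map_mxM in sub; rewrite -(mxrank_leqif_sup sub).2 eqn_leq mxrankS //=.
  by rewrite -APQ -{1}APY map_mxM mxrankM_maxl.
by apply: map_tofrac_inj; rewrite !map_mxM AZ -!mulmxA -!map_mxM -APQ APW.
Qed.

End FractionRank.

Section Bezout.
Variables (R : idomainType) (bezR : bezout_domain R).

Lemma bezout_gcd (a b : R) :
  exists g x y a' b', [/\ g = x * a + y * b, a = a' * g & b = b' * g].
Proof.
have [d hd] := bezR (fun i : 'I_2 => if i == 0 then a else b).
have [c hc] := (hd d).2 (ex_intro _ 1 (esym (mul1r d))).
have [a' ha] : exists r, a = r * d.
  apply/(hd a).1; exists (fun i : 'I_2 => if i == 0 then 1 else 0).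
  by rewrite !big_ord_recl big_ord0 /= mul0r mul1r !addr0.
have [b' hb] : exists r, b = r * d.
  apply/(hd b).1; exists (fun i : 'I_2 => if i == 0 then 0 else 1).
  by rewrite !big_ord_recl big_ord0 /= mul0r mul1r addr0 add0r.
exists d, (c ord0), (c (lift ord0 ord0)), a', b'; split=> //.
by rewrite hc !big_ord_recl big_ord0 /= addr0.
Qed.

Lemma bezout_col_reduce n (v : 'cV[R]_n.+1) :
  exists P d, P \in unitmx /\ P *m v = d *: delta_mx 0 0.
Proof.
elim: n v => [|n IH] v.
  exists 1%:M, (v 0 0); split; first exact: unitmx1.
  by apply/matrixP=> i j; rewrite (ord1 i) (ord1 j) mul1mx !mxE mulr1.
pose a := usubmx (v : 'cV_(1 + n.+1)) 0 0; pose w := dsubmx (v : 'cV_(1 + n.+1)).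
have [P [d [Pu Pw]]] := IH w.
pose B : 'M[R]_(1 + n.+1) := block_mx 1%:M 0 0 P.
have Bu : B \in unitmx by rewrite unitmxE det_ublock det1 mul1r -unitmxE.
have Bv : B *m v = col_mx (col2 a d) 0 :> 'cV_(2 + n).
  rewrite -(vsubmxK (v : 'cV_(1 + n.+1))) mul_block_col !mul0mx addr0 add0r.
  by rewrite mul1mx Pw -col_mx_col2 -mx11_scalar.
have [g [x [y [a' [b' [hg ha hb]]]]]] := bezout_gcd a d.
have [g0|gn0] := eqVneq g 0.
  exists B, 0; split=> //.
  by rewrite Bv ha hb g0 !mulr0 col_mx_col2_delta.
have xy1 : x * a' + y * b' = 1.
  by apply: (mulIf gn0); rewrite mul1r mulrDl -!mulrA -ha -hb -hg.
pose Q : 'M[R]_(2 + n) := block_mx (mx2 x y (- b') a') 0 0 1%:M.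
have Qu : Q \in unitmx.
  suff /mulmx1_unit[] : Q *m block_mx (mx2 a' (- y) b' x) 0 0 1%:M = 1%:M by [].
  rewrite mulmx_block !mulmx0 !mul0mx !addr0 !add0r mulmx1 mul_mx2 xy1.
  rewrite mulrN (mulrC y) addNr (mulrC a') mulNr addNr mulNr mulrN opprK.
  by rewrite (mulrC b') (mulrC a') addrC xy1 mx2_id -scalar_mx_block.
have QBv : Q *m col_mx (col2 a d) 0 = g *: delta_mx 0 0.
  rewrite mul_block_col !mul0mx !mulmx0 !addr0 mul_mx2_col2.
  by rewrite -hg ha hb mulNr mulrA (mulrC b') -mulrA addNr col_mx_col2_delta.
exists (Q *m B), g; split; first by rewrite unitmx_mul Qu Bu.
by rewrite -mulmxA Bv QBv.
Qed.

Lemma idempotent_similar_pid n (E : 'M[R]_n) :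
  E *m E = E -> exists2 r, (r <= n)%N & mx_similar E (pid_mx r).
Proof.
elim: n E => [|n IH] E idE.
  exists 0%N => //; exists 1%:M; split; first exact: unitmx1.
  by rewrite [E]flatmx0 [RHS]flatmx0.
have [E0|nzE] := eqVneq E 0.
  exists 0%N => //; exists 1%:M; split; first exact: unitmx1.
  by rewrite E0 pid_mx_0 mulmx0 mul0mx.
have [j nzEj] : exists j, col j E != 0.
  apply/existsP; apply: contraR nzE => /existsPn Ej0; apply/eqP/matrixP=> i j.
  by move/negPn/eqP/matrixP/(_ i 0): (Ej0 j); rewrite !mxE.
have Ew : E *m col j E = col j E by rewrite colE mulmxA idE.
have [P [d [Pu Pw]]] := bezout_col_reduce (col j E).
have dn0 : d != 0.
  apply: contraNneq nzEj => d0.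
  by rewrite -(mulKmx Pu (col j E)) Pw d0 scale0r mulmx0.
pose E' := P *m E *m invmx P.
have simE : mx_similar E E' by apply/mx_similarP; exists P; rewrite // mulmxKV.
have idE' : E' *m E' = E'.
  by rewrite /E' !mulmxA mulmxKV // -(mulmxA _ E E) idE.
have E'e : E' *m delta_mx 0 0 = delta_mx 0 0 :> 'cV_(1 + n).
  apply/eqP; rewrite -subr_eq0 -[_ == 0]orFb -(negPf dn0) -scalemx_eq0 scalerBr.
  by rewrite scalemxAr -Pw /E' -!mulmxA mulKmx // Ew subrr.
have [a [D [E'K DD aD]]] := idempotent_block idE' E'e.
have [r rn simD] := IH D DD.
exists r.+1 => //; apply: mx_similar_trans simE _.
by rewrite E'K; exact: block_similar_pid.
Qed.

End Bezout.

Lemma similar_of_reflexive_inverse (R : idomainType) n (U V M N : 'M[R]_n) :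
  bezout_domain R ->
  U *m V *m U = U -> V *m U *m V = V ->
  U *m V *m M = M -> N *m (V *m U) = N -> V *m M = N *m V ->
  mx_similar M N.
Proof.
move=> bezR UVU VUV EM NF VMN.
have idE : U *m V *m (U *m V) = U *m V by rewrite mulmxA UVU.
have idF : V *m U *m (V *m U) = V *m U by rewrite mulmxA VUV.
have [r rn simE] := idempotent_similar_pid bezR idE.
have [s sn simF] := idempotent_similar_pid bezR idF.
have rs : r = s.
  rewrite -(frac_rank_similar_pid rn simE) -(frac_rank_similar_pid sn simF).
  apply/eqP; rewrite eqn_leq; apply/andP; split.
    by rewrite -{1}idE -{1}UVU !mulmxA -(mulmxA _ V U) frac_rank_mulmx_le.
  by rewrite -{1}idF -{1}VUV !mulmxA -(mulmxA _ U V) frac_rank_mulmx_le.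
subst s; have [W [Su WE FW]] :=
  reflexive_inverse_complement (@pid_mx_id _ n n n r rn) simE simF UVU VUV.
apply/mx_similarP; exists (V + W) => //.
have WM : W *m M = 0 by rewrite -EM mulmxA WE mul0mx.
have NW : N *m W = 0 by rewrite -NF -mulmxA FW mulmx0.
by rewrite mulmxDl mulmxDr WM NW !addr0 VMN.
Qed.

Lemma colspace_sub_mulmx (R : pzRingType) m n p (M : 'M[R]_(m, n)) (N : 'M[R]_(m, p)) :
  (forall y, colspace M y -> colspace N y) -> exists X, M = N *m X.
Proof.
move=> MN; have /fin_all_exists[x Mx] : forall j, exists x, col j M = N *m x.
  by move=> j; apply: MN; exists (delta_mx j 0); rewrite colE.
exists (\matrix_(i, j) x j i 0); apply/matrixP=> i j.
move/matrixP/(_ i 0): (Mx j); rewrite !mxE => ->.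
by apply: eq_bigr => k _; rewrite mxE.
Qed.

Section InnerInverse.
Variables (R : idomainType) (n : nat) (A B C X : 'M[R]_n).
Hypotheses (AX : A = A *m B *m A *m X) (ABA : A *m B *m A = A *m C *m A).

Lemma ABA_cancel k (W1 W2 : 'M_(n, k)) :
  A *m B *m A *m W1 = A *m B *m A *m W2 -> A *m W1 = A *m W2.
Proof.
by rewrite -!(mulmxA A B A); apply: (mulmx_cancel_inner (Y := X)); rewrite ?mulmxA -?AX.
Qed.

Lemma AXBA : A *m X *m B *m A = A.
Proof.
by rewrite -[RHS]mulmx1 -!mulmxA; apply: ABA_cancel; rewrite mulmx1 !mulmxA -AX.
Qed.

Lemma AXBA_l m (Z : 'M_(m, n)) : Z *m A *m X *m B *m A = Z *m A.
Proof. by rewrite -[in RHS]AXBA !mulmxA. Qed.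

Lemma ACAX : A *m C *m A *m X = A.
Proof. by rewrite -ABA -AX. Qed.

Lemma ACAX_l m (Z : 'M_(m, n)) : Z *m A *m C *m A *m X = Z *m A.
Proof. by rewrite -[in RHS]ACAX !mulmxA. Qed.

Lemma CACA_cancel k (W1 W2 : 'M_(n, k)) :
  C *m A *m (C *m A) *m W1 = C *m A *m (C *m A) *m W2 -> C *m A *m W1 = C *m A *m W2.
Proof. by apply: (mulmx_cancel_inner (Y := X)); rewrite // !mulmxA ACAX_l. Qed.

Lemma CAXCA : C *m A *m X *m C *m A = C *m A.
Proof.
rewrite -[RHS]mulmx1 -(mulmxA _ X) -(mulmxA _ (X *m C)); apply: CACA_cancel.
by rewrite mulmx1 !mulmxA ACAX_l.
Qed.

Lemma AXCAX : A *m X *m C *m A *m X = A *m X.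
Proof. by rewrite -!mulmxA; apply: ABA_cancel; rewrite !mulmxA -AX ACAX. Qed.

End InnerInverse.

Theorem corollary2p2 (R : idomainType) (n : nat) (A B C : 'M[R]_n) :
  bezout_domain R ->
  A *m B *m A = A *m C *m A ->
  (forall y : 'cV[R]_n, colspace A y <-> colspace (A *m B *m A) y) ->
  mx_similar (A *m B) (C *m A).
Proof.
move=> bezR ABA sameCol.
have [X AX] := colspace_sub_mulmx (fun y => (sameCol y).1).
apply: (similar_of_reflexive_inverse (U := A *m X) (V := C *m A *m X *m B)) => //;
  rewrite !mulmxA.
- by rewrite (AXBA_l AX) (AXCAX AX ABA).
- by rewrite (AXBA_l AX) (CAXCA AX ABA).
- by rewrite (AXCAX AX ABA) (AXBA AX).
- by rewrite (AXBA_l AX) (ACAX_l AX ABA).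
- by rewrite (AXBA_l AX) (ACAX_l AX ABA).
Qed.
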